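(* Let $\mathcal{G}$ be a finite groupoid (finitely many objects and finite hom-sets) and let $Q$ be the quiver arising from it, with connected components $C_1,\dots,C_k$. Let $A$ be the adjacency matrix of $Q$ and let $A_{C_1},\dots,A_{C_k}$ be the diagonal blocks of $A$ corresponding to the connected components. Then for each $i$, the matrix $A_{C_i}\otimes A_{C_i}$ satisfies the quantum Yang–Baxter equation; equivalently, there exists a scalar $\mu_i$ with $A_{C_i}^2=\mu_i A_{C_i}$. Furthermore, there exists a single scalar $\mu$ with $A^2=\mu A$ if and only if $\mu_1=\mu_2=\dots=\mu_k$.
   Context: The quiver arising from a groupoid $\mathcal{G}$ has the objects of $\mathcal{G}$ as vertices and, for objects $x,y$, one arrow from $x$ to $y$ for each morphism in $\mathrm{Hom}(x,y)$ (identities included). Its adjacency matrix is $A_{xy}=|\mathrm{Hom}(x,y)|$. Connected components are the classes of objects $x,y$ with $\mathrm{Hom}(x,y)\neq\emptyset$, and $A_{C}$ is the principal submatrix of $A$ on the objects of $C$. An $m^2\times m^2$ matrix $X$ satisfies the quantum Yang–Baxter equation if $(X\otimes I_m)(I_m\otimes X)(X\otimes I_m)=(I_m\otimes X)(X\otimes I_m)(I_m\otimes X)$, where $\otimes$ is the Kronecker product and $I_m$ the $m\times m$ identity. *)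

From HB Require Import structures.
From mathcomp Require Import all_boot all_order all_algebra.
From mathcomp Require Export mxtens.
Set Implicit Arguments. Unset Strict Implicit. Unset Printing Implicit Defensive.
Import Order.TTheory GRing.Theory Num.Theory.
Local Open Scope ring_scope.

(* A finite groupoid with objects 'I_n, presented by its finite set of
   morphisms [mor], source/target maps, identities, composition and inverses.
   [comp g f] is g \o f, defined (meaningful) when tgt f = src g. *)
Record fin_groupoid (n : nat) := FinGroupoid {
  mor : finType;
  src : mor -> 'I_n;
  tgt : mor -> 'I_n;
  idm : 'I_n -> mor;
  comp : mor -> mor -> mor;
  inv : mor -> mor;
  src_idm : forall x, src (idm x) = x;
  tgt_idm : forall x, tgt (idm x) = x;
  src_comp : forall f g, tgt f = src g -> src (comp g f) = src f;
  tgt_comp : forall f g, tgt f = src g -> tgt (comp g f) = tgt g;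
  compA : forall f g h, tgt f = src g -> tgt g = src h ->
            comp h (comp g f) = comp (comp h g) f;
  comp_idr : forall f, comp f (idm (src f)) = f;
  comp_idl : forall f, comp (idm (tgt f)) f = f;
  src_inv : forall f, src (inv f) = tgt f;
  tgt_inv : forall f, tgt (inv f) = src f;
  comp_invl : forall f, comp (inv f) f = idm (src f);
  comp_invr : forall f, comp f (inv f) = idm (tgt f)
}.

Definition hom n (G : fin_groupoid n) (x y : 'I_n) : {set mor G} :=
  [set f | (src f == x) && (tgt f == y)].

Definition adj (R : pzRingType) n (G : fin_groupoid n) : 'M[R]_n :=
  \matrix_(x, y) (#|hom G x y|)%:R.

Definition component n (G : fin_groupoid n) (x : 'I_n) : {set 'I_n} :=
  [set y | hom G x y != set0].

(* principal submatrix of A on the index set C (in the enumeration order of C) *)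
Definition principal_submx (R : Type) n (A : 'M[R]_n) (C : {set 'I_n})
  : 'M[R]_#|C| :=
  \matrix_(i, j) A (enum_val i) (enum_val j).

Definition QYBE (R : pzRingType) (m : nat) (X : 'M[R]_(m * m)) : Prop :=
  let XI : 'M[R]_(m * m * m) := X *t (1%:M : 'M[R]_m) in
  let IX : 'M[R]_(m * m * m) :=
    castmx (mulnA m m m, mulnA m m m) ((1%:M : 'M[R]_m) *t X) in
  XI *m IX *m XI = IX *m XI *m IX.

From Pilot Require Import Defs.
From HB Require Import structures.
From mathcomp Require Import all_boot all_order all_algebra.
Import Order.TTheory GRing.Theory Num.Theory.
Local Open Scope ring_scope.
Set Implicit Arguments. Unset Strict Implicit. Unset Printing Implicit Defensive.

(* Within a connected component C all hom-sets are in bijection (compose on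
   both sides with fixed morphisms), so A is the constant a_C = |Hom(x,x)| on
   the block C x C and 0 elsewhere.  Hence A_C^2 = mu_C A_C with
   mu_C = |C| a_C, and whenever B^2 = mu B both sides of the Yang-Baxter
   equation for B (x) B equal mu^3 (B (x) B (x) B).  Globally A^2 = D A with
   D diagonal, carrying mu_C on the objects of C; as A has a nonzero diagonal,
   A^2 = mu A exactly when D = mu. *)

Section GroupoidComponents.

Variables (n : nat) (G : fin_groupoid n).

Lemma homP x y :
  reflect (exists f : mor G, src f = x /\ tgt f = y) (Defs.hom G x y != set0).
Proof.
apply: (iffP (set0Pn _)) => [[f]|[f [<- <-]]]; last by exists f; rewrite inE !eqxx.
by rewrite inE => /andP[/eqP <- /eqP <-]; exists f.
Qed.

Lemma component_refl x : x \in component G x.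
Proof. by rewrite inE; apply/homP; exists (idm G x); rewrite src_idm tgt_idm. Qed.

Lemma component_sym x y : y \in component G x -> x \in component G y.
Proof.
rewrite !inE => /homP[f [sf tf]]; apply/homP.
by exists (Defs.inv f); rewrite src_inv tgt_inv.
Qed.

Lemma component_trans x y z :
  y \in component G x -> z \in component G y -> z \in component G x.
Proof.
rewrite !inE => /homP[f [sf tf]] /homP[g [sg tg]]; apply/homP.
have fg : tgt f = src g by rewrite tf sg.
by exists (Defs.comp g f); rewrite (src_comp fg) (tgt_comp fg).
Qed.

Lemma component_eq x y : y \in component G x -> component G y = component G x.
Proof.
move=> xy; apply/setP=> z; apply/idP/idP; first exact: component_trans.
exact/component_trans/(component_sym xy).
Qed.

Lemma card_hom_le x' x y y' :
  x \in component G x' -> y' \in component G y ->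
  (#|Defs.hom G x y| <= #|Defs.hom G x' y'|)%N.
Proof.
rewrite !inE => /homP[f [sf tf]] /homP[g [sg tg]].
pose conj h := Defs.comp g (Defs.comp h f).
have conj_hom h : h \in Defs.hom G x y ->
    [/\ tgt f = src h, tgt (Defs.comp h f) = src g & conj h \in Defs.hom G x' y'].
  rewrite inE => /andP[/eqP sh /eqP th].
  have fh : tgt f = src h by rewrite tf sh.
  have hfg : tgt (Defs.comp h f) = src g by rewrite (tgt_comp fh) th sg.
  by split; rewrite // inE (src_comp hfg) (src_comp fh) (tgt_comp hfg) sf tg !eqxx.
have conjK : {in Defs.hom G x y,
    cancel conj (fun k => Defs.comp (Defs.comp (Defs.inv g) k) (Defs.inv f))}.
  move=> h /conj_hom[fh hfg _].
  rewrite /conj (Defs.compA hfg (esym (src_inv g))) comp_invl -hfg comp_idl.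
  have f'f : tgt (Defs.inv f) = src f by rewrite tgt_inv.
  by rewrite -(Defs.compA f'f fh) comp_invr fh comp_idr.
rewrite -(card_in_imset (can_in_inj conjK)); apply/subset_leq_card/subsetP => k.
by case/imsetP=> h /conj_hom[_ _ hk] ->.
Qed.

Lemma card_hom_component x y z :
  y \in component G x -> z \in component G x ->
  #|Defs.hom G y z| = #|Defs.hom G x x|.
Proof.
move=> xy xz; apply/eqP; rewrite eqn_leq.
by rewrite (card_hom_le xy (component_sym xz)) (card_hom_le (component_sym xy) xz).
Qed.

Lemma card_hom_gt0 x : (0 < #|Defs.hom G x x|)%N.
Proof. by rewrite card_gt0; have := component_refl x; rewrite inE. Qed.

Definition component_weight x : nat := #|component G x| * #|Defs.hom G x x|.

End GroupoidComponents.

Lemma tensmxZl (R : comPzRingType) m n p q (a : R) (M : 'M[R]_(m, n))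
    (N : 'M[R]_(p, q)) :
  (a *: M) *t N = a *: (M *t N).
Proof. by apply/matrixP=> i j; rewrite !mxE mulrA. Qed.

Lemma tensmxZr (R : comPzRingType) m n p q (a : R) (M : 'M[R]_(m, n))
    (N : 'M[R]_(p, q)) :
  M *t (a *: N) = a *: (M *t N).
Proof. by apply/matrixP=> i j; rewrite !mxE mulrCA. Qed.

Lemma tensmxA (R : pzRingType) m n p q r s
    (A : 'M[R]_(m, n)) (B : 'M[R]_(p, q)) (C : 'M[R]_(r, s)) :
  castmx (mulnA m p r, mulnA n q s) (A *t (B *t C)) = (A *t B) *t C.
Proof.
have index_assoc k l h (a : 'I_k) (b : 'I_l) (c : 'I_h) :
    cast_ord (esym (mulnA k l h)) (mxtens_index (mxtens_index (a, b), c))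
    = mxtens_index (a, mxtens_index (b, c)).
  by apply: val_inj => /=; rewrite mulnDl -mulnA addnA.
apply/matrixP=> i j; rewrite castmxE.
case: (mxtens_indexP i) => i1 i2; case: (mxtens_indexP i1) => i11 i12.
case: (mxtens_indexP j) => j1 j2; case: (mxtens_indexP j1) => j11 j12.
by rewrite /= !index_assoc !tensmxE mulrA.
Qed.

Lemma QYBE_tensmx_quasi_idem (R : comPzRingType) m (B : 'M[R]_m) (mu : R) :
  B *m B = mu *: B -> QYBE (B *t B).
Proof.
move=> BB; rewrite /QYBE /= tensmxA !tensmx_mul !mul1mx !mulmx1 BB -scalemxAl BB.
by rewrite !tensmxZl !tensmxZr !scalerA.
Qed.

Lemma mul_const_mx (R : pzRingType) m n p (a b : R) :
  (const_mx a : 'M_(m, n)) *m (const_mx b : 'M_(n, p)) = const_mx (a * b *+ n).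
Proof.
apply/matrixP=> i j; rewrite !mxE.
under eq_bigr => k _ do rewrite !mxE.
by rewrite sumr_const card_ord.
Qed.

Lemma diag_mulmx_eq_scale (R : idomainType) n (d : 'rV[R]_n) (A : 'M[R]_n) :
  (forall x, A x x != 0) ->
  (exists mu, diag_mx d *m A = mu *: A) <-> (forall x y, d 0 x = d 0 y).
Proof.
move=> Axx_neq0; rewrite mul_diag_mx; split=> [[mu /matrixP dA] | d_const].
  suff d_mu x : d 0 x = mu by move=> x y; rewrite !d_mu.
  by apply: (mulIf (Axx_neq0 x)); have := dA x x; rewrite !mxE.
case: n d A Axx_neq0 d_const => [|n] d A _ d_const.
  by exists 0; apply/matrixP => -[].
by exists (d 0 ord0); apply/matrixP => x y; rewrite !mxE (d_const x ord0).
Qed.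

Section Adjacency.

Variables (R : numFieldType) (n : nat) (G : fin_groupoid n).

Local Notation A := (adj R G).
Local Notation AC x := (principal_submx A (component G x)).

Lemma adjE x y :
  A x y = (if y \in component G x then #|Defs.hom G x x| else 0)%:R.
Proof.
rewrite mxE; case: ifP => [xy | /negbT].
  by rewrite (card_hom_component (component_refl G x) xy).
by rewrite inE negbK => /eqP ->; rewrite cards0.
Qed.

Lemma adj_diag_neq0 x : A x x != 0.
Proof. by rewrite adjE component_refl pnatr_eq0 -lt0n card_hom_gt0. Qed.

Lemma principal_submx_adj x : AC x = const_mx #|Defs.hom G x x|%:R.
Proof.
by apply/matrixP => i j; rewrite !mxE (card_hom_component (enum_valP i) (enum_valP j)).
Qed.

Lemma principal_submx_adj_neq0 x : AC x != 0.
Proof.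
have xx := component_refl G x.
apply: contraNneq (adj_diag_neq0 x) => /matrixP/(_ (enum_rank_in xx x) (enum_rank_in xx x)).
by rewrite mxE [RHS]mxE enum_rankK_in // => ->.
Qed.

Lemma principal_submx_adj_sqr x :
  AC x *m AC x = (component_weight G x)%:R *: AC x.
Proof.
rewrite principal_submx_adj mul_const_mx scalemx_const.
by rewrite -mulrnAl natrM mulr_natl.
Qed.

Lemma adj_sqr : A *m A = diag_mx (\row_x (component_weight G x)%:R) *m A.
Proof.
rewrite mul_diag_mx; apply/matrixP => x y; rewrite [LHS]mxE [RHS]mxE [X in X * _]mxE.
rewrite (bigID (mem (component G x))) /= [X in _ + X]big1 ?addr0 => [|z xz]; last first.
  by rewrite adjE (negbTE xz) mul0r.
have in_component z : z \in component G x ->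
    A x z * A z y = #|Defs.hom G x x|%:R * A x y.
  by move=> xz; rewrite !adjE xz (component_eq xz) (card_hom_component xz xz).
rewrite (eq_bigr _ in_component) sumr_const.
by rewrite /component_weight natrM -mulrA [RHS]mulr_natl.
Qed.

End Adjacency.

Theorem proposition2p12 (R : numFieldType) (n : nat) (G : fin_groupoid n) :
  let A := adj R G in
  let AC := fun x : 'I_n => principal_submx A (component G x) in
  (forall x : 'I_n,
     QYBE (AC x *t AC x) /\ exists mu : R, AC x *m AC x = mu *: AC x) /\
  (forall mu_ : 'I_n -> R,
     (forall x : 'I_n, AC x *m AC x = mu_ x *: AC x) ->
     ((exists mu : R, A *m A = mu *: A) <-> (forall x y : 'I_n, mu_ x = mu_ y))).
Proof.
rewrite /=.
split=> [x | mu_ AC_sqr].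
  split; last by exists (component_weight G x)%:R; exact: principal_submx_adj_sqr.
  exact: QYBE_tensmx_quasi_idem (principal_submx_adj_sqr R G x).
have muE x : mu_ x = (component_weight G x)%:R.
  have : (mu_ x - (component_weight G x)%:R) *:
           principal_submx (adj R G) (component G x) == 0.
    by rewrite scalerBl -AC_sqr -principal_submx_adj_sqr subrr.
  by rewrite scaler_eq0 subr_eq0 (negbTE (principal_submx_adj_neq0 R G x)) orbF => /eqP.
rewrite adj_sqr; apply: iff_trans (diag_mulmx_eq_scale _ (@adj_diag_neq0 R n G)) _.
by split=> same x y; move: (same x y); rewrite !mxE !muE.
Qed.
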